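(* Let $K$ be a field of characteristic zero, $x=(x_1,\dots,x_n)$, and let $d\ge 2$. Let $f\in K[x]$ have nonzero terms of degrees $0,1,d$ only, say $f=f^{(0)}+f^{(1)}+f^{(d)}$ with $f^{(k)}$ homogeneous of degree $k$. Suppose that $f$ is reducible and that $\mathcal{J}f=(\partial f/\partial x_1,\dots,\partial f/\partial x_n)$ is unimodular. Then: (a) if $d\le 3$ or $f^{(0)}=0$, then $f$ has a divisor of degree $1$; (b) if $f$ has a divisor of degree $1$, then $f^{(0)}=0$, $f^{(1)}\mid f$ and $(f^{(1)})^2\mid f^{(d)}$.
   Context: A row vector of polynomials in $K[x]$ is unimodular if its entries generate the unit ideal of $K[x]$. *)

From HB Require Import structures.
From mathcomp Require Import all_boot all_order all_algebra.
From mathcomp Require Import mpoly.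
Set Implicit Arguments. Unset Strict Implicit. Unset Printing Implicit Defensive.
Import Order.TTheory GRing.Theory.
Local Open Scope ring_scope.

Definition mdvd (K : fieldType) (n : nat) (p q : {mpoly K[n]}) : Prop :=
  exists r : {mpoly K[n]}, q = r * p.

Definition mreducible (K : fieldType) (n : nat) (f : {mpoly K[n]}) : Prop :=
  [/\ f != 0, f \isn't a GRing.unit &
      exists g h : {mpoly K[n]},
        [/\ f = g * h, g \isn't a GRing.unit & h \isn't a GRing.unit]].

(* total degree of a nonzero p is (msize p).-1 ; degree 1 <-> msize p = 2 *)
Definition has_linear_divisor (K : fieldType) (n : nat) (f : {mpoly K[n]}) : Prop :=
  exists g : {mpoly K[n]}, msize g = 2%N /\ mdvd g f.

Definition jacobian_unimodular (K : fieldType) (n : nat) (f : {mpoly K[n]}) : Prop :=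
  exists g : 'I_n -> {mpoly K[n]}, \sum_(i < n) g i * f^`M(i) = 1.

From HB Require Import structures.
From mathcomp Require Import all_boot all_order all_algebra.
From mathcomp Require Import mpoly.
From mathcomp Require Import zify ring.
Set Implicit Arguments. Unset Strict Implicit. Unset Printing Implicit Defensive.
Import GRing.Theory.
Local Open Scope ring_scope.

(* Everything rests on one substitution: for a polynomial g of degree one whose
   linear part l has a nonzero coefficient at x_k, the K-algebra map sigma sending
   x_k to x_k - g / (dl/dx_k) kills g, its kernel is the ideal (g), and it maps
   homogeneous polynomials to homogeneous ones of the same degree when g is a
   linear form.
   (a) For d <= 3 a degree count forces one factor of f to be linear.  If
   f^(0) = 0, unimodularity gives f^(1) <> 0, so one factor u of f = u v has a
   nonzero constant term; for g = f^(1) we get sigma u * sigma v = sigma f^(d),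
   homogeneous of degree d > deg v, whence sigma v = 0 and f^(1) | v.
   (b) If g = a + l divides f = r g, then sigma (df/dx_i) = sigma r * dg/dx_i, so
   sigma r is a unit, i.e. a constant.  Euler's identity and char K = 0 then make
   sigma f^(1) constant, so f^(1) = alpha l.  If a <> 0, then f^(d) = beta l^d and
   every partial of f is a multiple of alpha + d beta l^(d-1), which must therefore
   be a unit; so beta = 0 and deg f <= 1, a contradiction.  Hence g = l is a linear
   form, and applying sigma to f^(d) = q g and then to q gives g^2 | f^(d). *)

Local Notation hcomp k := (@pihomog _ _ mdeg k).

Section HomogComponents.
Variables (R : nzRingType) (n : nat).
Implicit Types (p q : {mpoly R[n]}).

Lemma mcoeff_pihomog k p m : (hcomp k p)@_m = if mdeg m == k then p@_m else 0.
Proof.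
rewrite pihomogE raddf_sum /= big_mkcond /=.
rewrite (eq_bigr (fun m' => (if mdeg m == k then p@_m' else 0) * (m' == m)%:R)); last first.
  move=> m' _; have [-> | ne] := eqVneq m' m; case: ifP => _;
    by rewrite ?mcoeff0 ?mul0r ?mulr0 // linearZ /= mcoeffX ?eqxx ?(negbTE ne) ?mulr0.
have [pm | /memN_msupp_eq0 pm] := boolP (m \in msupp p).
  rewrite (bigD1_seq m) ?msupp_uniq //= eqxx mulr1 big1 ?addr0 // => m' /negbTE.
  by rewrite eq_sym => ->; rewrite mulr0.
rewrite pm if_same big_seq big1 // => m' m'p.
by have [-> | _] := eqVneq m' m; rewrite ?pm ?if_same ?mul0r ?mulr0.
Qed.


Lemma pihomog0E p : hcomp 0 p = (p@_0)%:MP.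
Proof.
apply/mpolyP => m; rewrite mcoeff_pihomog mcoeffC mdeg_eq0.
by have [-> | _] := eqVneq m 0%MM; rewrite ?mulr1 ?mulr0.
Qed.

Lemma dhomogC (c : R) : c%:MP \is [in R[n], 0.-homog].
Proof. by rewrite dhomogE msuppC; case: eqP => //= _; rewrite andbT mdeg0. Qed.

Lemma dhomog0_mpolyC p : p \is 0.-homog -> p = (p@_0)%:MP.
Proof. by move=> p0; rewrite -pihomog0E pihomog_dE. Qed.

Lemma msize_dhomog_le k p : p \is k.-homog -> (msize p <= k.+1)%N.
Proof. by move=> /dhomogP hp; rewrite msizeE; apply/bigmax_leqP_seq => m /hp ->. Qed.

Lemma msize_dhomog k p : p != 0 -> p \is k.-homog -> msize p = k.+1.
Proof. by move=> p0 /dhomogP hp; rewrite -(mlead_deg p0) hp ?mlead_supp. Qed.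

Lemma pihomogMl i k p q : p \is i.-homog ->
  hcomp k (p * q) = if (i <= k)%N then p * hcomp (k - i) q else 0.
Proof.
move=> hp; pose N := (msize q + k).+1.
rewrite {1}(@pihomog_partitionE _ _ mdeg N q); last by rewrite /N; lia.
rewrite mulr_sumr raddf_sum /=.
rewrite (eq_bigr (fun j : 'I_N => if (i + j == k)%N then p * hcomp j q else 0)); last first.
  move=> j _; have hpj : p * hcomp j q \is (i + j).-homog by rewrite dhomogM ?pihomogP.
  by case: eqP => [<- | /eqP ne]; [rewrite pihomog_dE | rewrite (pihomog_ne0 ne)].
rewrite -big_mkcond /=; case: leqP => ik; last by rewrite big_pred0 // => j; lia.
have kiN : (k - i < N)%N by rewrite /N; lia.
by rewrite (big_pred1 (Ordinal kiN)) // => j; rewrite /= -val_eqE /=; lia.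
Qed.

Lemma pihomogM k p q : hcomp k (p * q) = \sum_(i < k.+1) hcomp i p * hcomp (k - i) q.
Proof.
pose N := (msize p + k).+1.
rewrite {1}(@pihomog_partitionE _ _ mdeg N p); last by rewrite /N; lia.
rewrite mulr_suml raddf_sum /=.
rewrite (eq_bigr (fun i : 'I_N => if (i <= k)%N then hcomp i p * hcomp (k - i) q else 0));
  last by move=> i _; rewrite (pihomogMl _ _ (pihomogP _ _ _)).
have kN : (k.+1 <= N)%N by rewrite /N; lia.
rewrite -big_mkcond /= (big_ord_widen N (fun i => hcomp i p * hcomp (k - i) q) kN).
by apply: eq_bigl.
Qed.

Lemma mderiv_dhomog k i p : p \is k.-homog -> p^`M(i) \is k.-1.-homog.
Proof.
move=> /dhomogP hp; apply/dhomogP => m; rewrite mcoeff_msupp mcoeff_deriv => hm.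
have /hp : (m + U_(i))%MM \in msupp p.
  by rewrite mcoeff_msupp; apply: contraNneq hm => ->; rewrite mul0rn.
by move=> e; have := mdegD m U_(i); rewrite e mdeg1 addn1 => ->.
Qed.

Lemma msize2_split (g : {mpoly R[n]}) : msize g = 2 -> g = (g@_0)%:MP + hcomp 1 g.
Proof.
by move=> sg; rewrite {1}(@pihomog_partitionE _ _ mdeg 2 g) ?sg // big_ord_recl big_ord1 pihomog0E.
Qed.

Lemma msize2_pihomog1_neq0 (g : {mpoly R[n]}) : msize g = 2 -> hcomp 1 g != 0.
Proof.
move=> sg; apply/eqP => g1; move: sg (msize2_split sg) => + gE.
by rewrite gE g1 addr0 msizeC; case: (_ != 0).
Qed.

End HomogComponents.

Section EulerOperator.
Variables (R : comNzRingType) (n : nat).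
Implicit Types (p q l : {mpoly R[n]}).

Definition euler_op p := \sum_(i < n) 'X_i * p^`M(i).

Lemma euler_opD : {morph euler_op : p q / p + q}.
Proof. by move=> p q; rewrite -big_split; apply: eq_bigr => i _; rewrite mderivD mulrDr. Qed.

Lemma euler_op_dhomog k p : p \is k.-homog -> euler_op p = k%:R *: p.
Proof.
move=> /dhomogP hp; rewrite /euler_op {1 2}[p]mpolyE.
rewrite (eq_bigr (fun i => \sum_(m <- msupp p) p@_m *: ('X_i * ('X_[m])^`M(i))));
  last by move=> i _; rewrite raddf_sum mulr_sumr; apply: eq_bigr => m _; rewrite /= mderivZ -scalerAr.
rewrite exchange_big scaler_sumr /=; apply: eq_big_seq => m pm.
have <- : mdeg m = k := hp m pm.
rewrite -scaler_sumr scalerA mulrC -scalerA (mdegE m) natr_sum scaler_suml; congr (_ *: _).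
apply: eq_bigr => i _; rewrite mderivX -scalerAr.
have [-> | mi] := posnP (m i); first by rewrite !scale0r.
by congr (_ *: _); rewrite -mpolyXD addmC submK // lep1mP -lt0n.
Qed.

Lemma dhomog1E l : l \is 1.-homog -> l = \sum_(i < n) (l^`M(i))@_0 *: 'X_i.
Proof.
move=> hl; rewrite -[LHS]scale1r -(euler_op_dhomog hl); apply: eq_bigr => i _.
rewrite (dhomog0_mpolyC (mderiv_dhomog i hl)) -mul_mpolyC.
by rewrite (commr_mpolyX U_(i)) mcoeffC eqxx mulr1.
Qed.

Lemma dhomog1_mderiv_neq0 l : l != 0 -> l \is 1.-homog ->
  exists k, (l^`M(k))@_0 != 0.
Proof.
move=> l0 hl; apply/existsP; apply: contraR l0 => /existsPn l'0.
by rewrite (dhomog1E hl) big1 // => i _; rewrite (eqP (negPn (l'0 i))) scale0r.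
Qed.

Lemma euler_opM p q : euler_op (p * q) = p * euler_op q + q * euler_op p.
Proof.
rewrite /euler_op !mulr_sumr -big_split /=; apply: eq_bigr => i _.
by rewrite mderivM; ring.
Qed.

Lemma mderivXn i p e : (p ^+ e.+1)^`M(i) = e.+1%:R *: (p ^+ e * p^`M(i)).
Proof.
elim: e => [|e IH]; first by rewrite expr1 expr0 mul1r scale1r.
rewrite exprS mderivM IH -scalerAr mulrA -exprS [_ * p ^+ _]mulrC.
by rewrite -[X in X + _]scale1r -scalerDl -mulrS.
Qed.

End EulerOperator.

Section Substitution.
Variables (R : comNzRingType) (n : nat) (lq : n.-tuple {mpoly R[n]}).
Hypothesis lq_homog : forall i, tnth lq i \is 1.-homog.
Implicit Types (p l : {mpoly R[n]}).

Lemma comp_mpoly_dhomog e p : p \is e.-homog -> p \mPo lq \is e.-homog.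
Proof.
move=> /dhomogP hp; rewrite comp_mpolyEX big_seq.
apply: (big_ind (fun q => q \is e.-homog)) => [|q r|m pm]; rewrite ?dhomog0 //.
  exact: dhomogD.
have <- : mdeg m = e := hp m pm.
rewrite dhomogZ // comp_mpolyX (mdegE m).
apply: (big_ind2 (fun q d => q \is d.-homog)) => [|q1 d1 q2 d2|i _]; first exact: dhomog1.
  exact: dhomogM.
by rewrite -[X in X.-homog]mul1n dhomogMn.
Qed.

Lemma pihomog_comp_mpoly j p : hcomp j (p \mPo lq) = hcomp j p \mPo lq.
Proof.
pose N := (msize p + j).+1; have jN : (j < N)%N by rewrite /N; lia.
rewrite {1}(@pihomog_partitionE _ _ mdeg N p); last by rewrite /N; lia.
rewrite rmorph_sum raddf_sum (bigD1 (Ordinal jN)) //= big1 ?addr0.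
  by rewrite pihomog_dE // comp_mpoly_dhomog ?pihomogP.
move=> i ne; apply: (@pihomog_ne0 _ _ _ i); first by rewrite -val_eqE /= in ne.
by rewrite comp_mpoly_dhomog ?pihomogP.
Qed.

Lemma comp_mpoly_dhomog1 l : l \is 1.-homog ->
  l \mPo lq = \sum_(i < n) (l^`M(i))@_0 *: tnth lq i.
Proof.
move=> hl; rewrite {1}(dhomog1E hl) raddf_sum; apply: eq_bigr => i _.
by rewrite /= comp_mpolyZ comp_mpolyXU -tnth_nth.
Qed.

End Substitution.

Section ShiftVar.
Variables (R : comNzRingType) (n : nat) (k : 'I_n) (q : {mpoly R[n]}).

Definition shift_var : n.-tuple {mpoly R[n]} := [tuple 'X_i - (i == k)%:R *: q | i < n].

Lemma tnth_shift_var i : tnth shift_var i = 'X_i - (i == k)%:R *: q.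
Proof. exact: tnth_mktuple. Qed.

Lemma shift_var_dhomog : q \is 1.-homog -> forall i, tnth shift_var i \is 1.-homog.
Proof.
move=> hq i; rewrite tnth_shift_var rpredB ?rpredZ //.
by rewrite dhomogX /= mdeg1.
Qed.

Lemma comp_shift_var_dhomog1 l : l \is 1.-homog ->
  l \mPo shift_var = l - (l^`M(k))@_0 *: q.
Proof.
move=> hl; rewrite comp_mpoly_dhomog1 //.
under eq_bigr do rewrite tnth_shift_var scalerBr scalerA.
rewrite sumrB -dhomog1E //; congr (_ - _).
rewrite (bigD1 k) //= eqxx mulr1 big1 ?addr0 // => i /negbTE ->.
by rewrite mulr0 scale0r.
Qed.

End ShiftVar.

Section Divisibility.
Variables (K : fieldType) (n : nat).
Implicit Types (g p q : {mpoly K[n]}).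

Lemma mdvd0 g : mdvd g 0.
Proof. by exists 0; rewrite mul0r. Qed.

Lemma mdvdD g p q : mdvd g p -> mdvd g q -> mdvd g (p + q).
Proof. by move=> [r ->] [s ->]; exists (r + s); rewrite mulrDl. Qed.

Lemma mdvdMl g p q : mdvd g q -> mdvd g (p * q).
Proof. by move=> [r ->]; exists (p * r); rewrite mulrA. Qed.

Lemma mdvd_subM g p p' q q' :
  mdvd g (p - p') -> mdvd g (q - q') -> mdvd g (p * q - p' * q').
Proof.
move=> dp dq; have -> : p * q - p' * q' = p * (q - q') + q' * (p - p') by ring.
by apply: mdvdD; apply: mdvdMl.
Qed.

Lemma mdvd_subX g p p' e : mdvd g (p - p') -> mdvd g (p ^+ e - p' ^+ e).
Proof.
move=> dp; elim: e => [|e ih]; first by rewrite !expr0 subrr; apply: mdvd0.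
by rewrite !exprS; apply: mdvd_subM.
Qed.

Lemma mdvd_sub_comp_mpoly g (lq : n.-tuple {mpoly K[n]}) p :
  (forall i, mdvd g ('X_i - tnth lq i)) -> mdvd g (p - (p \mPo lq)).
Proof.
move=> dX; rewrite {1}[p]mpolyE comp_mpolyEX -sumrB.
apply: (big_ind (mdvd g)) => [|? ? |m _]; [exact: mdvd0 | exact: mdvdD |].
rewrite -scalerBr -mul_mpolyC; apply: mdvdMl; rewrite comp_mpolyX mpolyXE_id.
apply: (big_ind2 (fun a b => mdvd g (a - b))) => [|? ? ? ?|i _]; last exact: mdvd_subX.
  by rewrite subrr; apply: mdvd0.
exact: mdvd_subM.
Qed.

Lemma mdvd_sub_comp_shift_var k q p : mdvd q (p - (p \mPo shift_var k q)).
Proof.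
apply: mdvd_sub_comp_mpoly => i; rewrite tnth_shift_var opprB addrC subrK.
by exists (i == k)%:R%:MP; rewrite mul_mpolyC.
Qed.

Lemma mdvd_scalel c g p : mdvd (c *: g) p -> mdvd g p.
Proof. by move=> [r ->]; exists (c *: r); rewrite -scalerAl scalerAr. Qed.

Lemma comp_shift_var_eq0 k q p : p \mPo shift_var k q = 0 -> mdvd q p.
Proof. by move=> p0; have := mdvd_sub_comp_shift_var k q p; rewrite p0 subr0. Qed.

Lemma mpoly_unitE p : (p \is a GRing.unit) = (p == (p@_0)%:MP) && (p@_0 \is a GRing.unit).
Proof. by []. Qed.

Lemma jacobian_unimodular_unit (S : comUnitRingType)
    (phi : {rmorphism {mpoly K[n]} -> S}) f P (Q : 'I_n -> S) :
  jacobian_unimodular f -> (forall i, phi f^`M(i) = P * Q i) -> P \is a GRing.unit.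
Proof.
move=> [c cf] fP; apply/unitrPr; exists (\sum_i phi (c i) * Q i).
rewrite mulr_sumr -(rmorph1 phi) -cf rmorph_sum; apply: eq_bigr => i _.
by rewrite rmorphM fP mulrCA.
Qed.

End Divisibility.

Section LowDegree.
Variables (R : idomainType) (n : nat).
Implicit Types (u v : {mpoly R[n]}).

Lemma pihomog_eq0_of_dhomogM d u v j :
  u * v \is d.-homog -> hcomp 0 u != 0 -> (j < d)%N -> hcomp j v = 0.
Proof.
move=> huv u0; elim/ltn_ind: j => j IH jd.
have : hcomp j (u * v) = 0 by apply: (pihomog_ne0 _ huv); rewrite neq_ltn jd orbT.
rewrite pihomogM big_ord_recl subn0 big1 ?addr0 => [/eqP | i _].
  by rewrite mulf_eq0 (negbTE u0) => /eqP.
by rewrite IH ?mulr0 // lift0; have := ltn_ord i; lia.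
Qed.

End LowDegree.

Section Factors.
Variables (K : fieldType) (n : nat).
Implicit Types (f g p q : {mpoly K[n]}).

Lemma dhomog_mdvd_eq0 g q e :
  msize g = 2 -> g@_0 != 0 -> q \is e.-homog -> mdvd g q -> q = 0.
Proof.
move=> sg g0 hq [s qE]; have [s0 | sn0] := eqVneq s 0; first by rewrite qE s0 mul0r.
have gn0 : g != 0 by rewrite -msize_poly_eq0 sg.
have hsg : g * s \is e.-homog by rewrite mulrC -qE.
have g0' : hcomp 0 g != 0 by rewrite pihomog0E mpolyC_eq0.
have ss : (msize s <= e)%N.
  by have := msize_dhomog_le hq; rewrite qE msizeM // sg addn2.
rewrite qE (pihomog_partitionE ss) big1 ?mul0r // => j _.
exact: pihomog_eq0_of_dhomogM hsg g0' (ltn_ord j).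
Qed.

Lemma msize_nonunit p : p != 0 -> p \isn't a GRing.unit -> (2 <= msize p)%N.
Proof.
move=> p0; apply: contraR; rewrite -ltnNge ltnS => /msize1_polyC pE.
rewrite mpoly_unitE -pE eqxx unitfE /=; apply: contraNneq p0 => p00.
by rewrite pE p00 mpolyC0.
Qed.

Lemma mreducible_factors f : mreducible f -> exists g h,
  [/\ f = g * h, (2 <= msize g)%N, (2 <= msize h)%N & msize f = (msize g + msize h).-1].
Proof.
move=> [f0 _ [g [h [fgh gu hu]]]].
have g0 : g != 0 by apply: contraNneq f0 => g0; rewrite fgh g0 mul0r.
have h0 : h != 0 by apply: contraNneq f0 => h0; rewrite fgh h0 mulr0.
by exists g, h; split; rewrite ?msize_nonunit // fgh msizeM.
Qed.

Lemma mreducible_msize f : mreducible f -> (3 <= msize f)%N.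
Proof. by move=> /mreducible_factors [g [h [_ sg sh ->]]]; lia. Qed.

Lemma mreducible_msize_le4 f : mreducible f -> (msize f <= 4)%N -> has_linear_divisor f.
Proof.
move=> /mreducible_factors [g [h [fgh sg sh ->]]] sf.
have [sg2 | sh2] : msize g = 2 \/ msize h = 2 by lia.
  by exists g; split => //; exists h; rewrite fgh mulrC.
by exists h; split => //; exists g.
Qed.

End Factors.

Section Corollary.
Variables (K : fieldType) (n d : nat) (f f0 f1 fd : {mpoly K[n]}).
Hypotheses (d_ge2 : (2 <= d)%N) (f0_homog : f0 \is 0.-homog)
  (f1_homog : f1 \is 1.-homog) (fd_homog : fd \is d.-homog) (f_split : f = f0 + f1 + fd).

Lemma f0_const : f0 = (f0@_0)%:MP.
Proof. exact: dhomog0_mpolyC. Qed.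

Lemma pihomog1_f : hcomp 1 f = f1.
Proof.
rewrite f_split !raddfD /= (pihomog_dE f1_homog) (pihomog_ne0 _ f0_homog) //.
by rewrite (pihomog_ne0 _ fd_homog) ?add0r ?addr0 //; lia.
Qed.

Lemma msize_f_le : (msize f <= d.+1)%N.
Proof.
rewrite f_split; apply: leq_trans (msizeD_le _ _) _.
rewrite geq_max (msize_dhomog_le fd_homog) andbT; apply: leq_trans (msizeD_le _ _) _.
have := msize_dhomog_le f0_homog; have := msize_dhomog_le f1_homog.
by rewrite geq_max; lia.
Qed.

Lemma euler_op_f : euler_op f = f1 + d%:R *: fd.
Proof.
by rewrite f_split !euler_opD !(euler_op_dhomog f0_homog, euler_op_dhomog f1_homog,
  euler_op_dhomog fd_homog) scale0r scale1r add0r.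
Qed.

Lemma unimodular_f1_neq0 : jacobian_unimodular f -> f1 != 0.
Proof.
(* If f1 = 0, no partial derivative of f has a constant term. *)
move=> J; apply/eqP => f10; suff : (0 : K) \is a GRing.unit by rewrite unitr0.
apply: (jacobian_unimodular_unit (phi := mcoeff 0) (Q := fun=> 0) J) => i.
rewrite mulr0 f_split f10 addr0 mderivD f0_const mderivC add0r.
apply: (dhomog_nemf_coeff (mderiv_dhomog i fd_homog)); rewrite /= mdeg0; lia.
Qed.

Lemma mdvd_f1_cofactor u v : f0 = 0 -> f1 != 0 -> f = u * v ->
  hcomp 0 u != 0 -> (2 <= msize u)%N -> mdvd f1 v.
Proof.
move=> f00 f1n0 fuv u0 su; have [-> | vn0] := eqVneq v 0; first exact: mdvd0.
have un0 : u != 0 by apply: contraTneq su => ->; rewrite msize0.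
have v_small : (msize v <= d)%N.
  move: su msize_f_le; rewrite fuv msizeM //.
  by set x := msize u; set y := msize v; lia.
have [k f1k] := dhomog1_mderiv_neq0 f1n0 f1_homog.
set c := ((f1^`M(k))@_0)^-1; set sv := shift_var k (c *: f1).
have sv_homog : forall i, tnth sv i \is 1.-homog.
  exact/shift_var_dhomog/dhomogZ.
have sf1 : f1 \mPo sv = 0.
  by rewrite comp_shift_var_dhomog1 // scalerA mulfV // scale1r subrr.
have suv : (u \mPo sv) * (v \mPo sv) \is d.-homog.
  by rewrite -rmorphM -fuv f_split f00 add0r rmorphD /= sf1 add0r comp_mpoly_dhomog.
have su0 : hcomp 0 (u \mPo sv) != 0.
  by rewrite pihomog_comp_mpoly // pihomog0E comp_mpolyC -pihomog0E.
apply: (@mdvd_scalel _ _ c); apply: (@comp_shift_var_eq0 _ _ k).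
rewrite (pihomog_partitionE v_small) rmorph_sum big1 // => j _ /=.
by rewrite -pihomog_comp_mpoly // (pihomog_eq0_of_dhomogM suv su0).
Qed.

Lemma linear_divisor_of_f0_eq0 :
  f0 = 0 -> mreducible f -> jacobian_unimodular f -> has_linear_divisor f.
Proof.
move=> f00 /mreducible_factors [g [h [fgh sg sh _]]] J.
have f1n0 := unimodular_f1_neq0 J.
suff [u [v [fuv u0 su]]] : exists u v, [/\ f = u * v, hcomp 0 u != 0 & (2 <= msize u)%N].
  have [w vE] := mdvd_f1_cofactor f00 f1n0 fuv u0 su.
  exists f1; split; first exact: msize_dhomog f1n0 f1_homog.
  by exists (u * w); rewrite fuv vE mulrA.
have [g0 | g0] := eqVneq (hcomp 0 g) 0; last by exists g, h.
have [h0 | h0] := eqVneq (hcomp 0 h) 0; last by exists h, g; rewrite mulrC.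
move: f1n0; rewrite -pihomog1_f fgh pihomogM !big_ord_recr big_ord0 /= g0 h0.
by rewrite mul0r mulr0 !add0r eqxx.
Qed.

Section LinearFactor.
Hypotheses (char0 : [pchar K] =i pred0) (J : jacobian_unimodular f).
Variables (g r : {mpoly K[n]}) (k : 'I_n).
Hypotheses (msize_g : msize g = 2) (f_eq : f = r * g).

Let a := g@_0.
Let l := hcomp 1 g.
Hypothesis l_k : (l^`M(k))@_0 != 0.
Let sv := shift_var k (((l^`M(k))@_0)^-1 *: g).
Local Notation sigma p := (p \mPo sv).

Lemma natr_neq0 m : m != 0%N -> (m%:R : K) != 0.
Proof. by rewrite (pcharf0P K).1. Qed.

Lemma g_split : g = a%:MP + l.
Proof. exact: msize2_split. Qed.

Lemma l_homog : l \is 1.-homog.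
Proof. exact: pihomogP. Qed.

Lemma sigma_l : sigma l = - a%:MP.
Proof.
rewrite comp_shift_var_dhomog1 ?l_homog // scalerA mulfV // scale1r.
by rewrite g_split; ring.
Qed.

Lemma sigma_g : sigma g = 0.
Proof. by rewrite {1}g_split rmorphD /= comp_mpolyC sigma_l subrr. Qed.

Lemma sigma_eq0_mdvd p : sigma p = 0 -> mdvd g p.
Proof. by move=> /comp_shift_var_eq0; apply: mdvd_scalel. Qed.

Lemma sigma_r_const : exists kap, sigma r = kap%:MP.
Proof.
have : sigma r \is a GRing.unit.
  apply: (jacobian_unimodular_unit (phi := comp_mpoly sv)
    (Q := fun i => sigma g^`M(i)) J) => i.
  by rewrite f_eq mderivM rmorphD !rmorphM /= sigma_g mulr0 add0r.
by rewrite mpoly_unitE => /andP[/eqP -> _]; eexists.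
Qed.

Lemma sigma_f_split : f0 + sigma f1 + sigma fd = 0.
Proof.
have : sigma f = 0 by rewrite f_eq rmorphM /= sigma_g mulr0.
by rewrite f_split !rmorphD /= {1}f0_const comp_mpolyC -f0_const.
Qed.

Lemma sigma_f1_const : exists c, sigma f1 = c%:MP.
Proof.
have [kap r_kap] := sigma_r_const; have sf := sigma_f_split.
have sEf : sigma f1 + d%:R *: sigma fd = - (kap * a)%:MP.
  rewrite -linearZ -rmorphD /= -euler_op_f f_eq euler_opM rmorphD !rmorphM /= sigma_g.
  rewrite r_kap mul0r addr0 g_split euler_opD (euler_op_dhomog (dhomogC _ a)) scale0r add0r.
  by rewrite (euler_op_dhomog l_homog) scale1r sigma_l mulrN.
have d1 : ((1 - d%:R) : K) != 0.
  by rewrite -opprB oppr_eq0 -{1}(subnK (ltnW d_ge2)) natrD addrK natr_neq0 //; lia.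
have sfd : sigma fd = - (f0@_0)%:MP - sigma f1.
  by apply/eqP; rewrite -subr_eq0 -sf {2}f0_const; apply/eqP; ring.
exists ((1 - d%:R)^-1 * (d%:R * f0@_0 - kap * a)).
apply: (scalerI d1); rewrite rmorphM /= mul_mpolyC scalerA mulfV // scale1r.
rewrite rmorphB rmorphM /= -sEf sfd -!mul_mpolyC rmorphB /= !mpolyC_nat rmorph1.
ring.
Qed.

Lemma f1_proportional : exists2 al, al != 0 & f1 = al *: l.
Proof.
have [c sf1] := sigma_f1_const.
pose al := (f1^`M(k))@_0 * ((l^`M(k))@_0)^-1.
have f1E : f1 = al *: l.
  have := congr1 (hcomp 1) sf1; rewrite comp_shift_var_dhomog1 // raddfB /=.
  rewrite (pihomog_dE f1_homog) scalerA linearZ /= (pihomog_ne0 _ (dhomogC _ c)) //.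
  by move/eqP; rewrite subr_eq0 => /eqP.
exists al => //; apply: contraNneq (unimodular_f1_neq0 J) => al0.
by rewrite f1E al0 scale0r.
Qed.

Lemma fd_scaled_power : a != 0 -> exists be, fd = be *: l ^+ d.
Proof.
move=> a0; have [al _ f1E] := f1_proportional.
have sf1 : sigma f1 = - (al * a)%:MP by rewrite f1E linearZ /= sigma_l scalerN -mul_mpolyC rmorphM.
have sfd : sigma fd = (al * a - f0@_0)%:MP.
  by apply/eqP; rewrite -subr_eq0 -sigma_f_split {2}f0_const sf1 !rmorphB /=; apply/eqP; ring.
have an0 : (- a) ^+ d != 0 by rewrite expf_neq0 // oppr_eq0.
exists ((al * a - f0@_0) / (- a) ^+ d); apply/eqP; rewrite -subr_eq0; apply/eqP.
apply: (dhomog_mdvd_eq0 msize_g a0 (e := d)).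
  by rewrite rpredB ?dhomogZ // -[X in X.-homog]mul1n dhomogMn ?l_homog.
apply: sigma_eq0_mdvd; rewrite rmorphB /= comp_mpolyZ rmorphXn /= sfd sigma_l.
by rewrite -mpolyCN -(rmorphXn (@mpolyC n K)) -mul_mpolyC -mpolyCM mulfVK // subrr.
Qed.

Lemma g_const_term_eq0 : (3 <= msize f)%N -> a = 0.
Proof.
move=> sf; apply: contraTeq sf => a0; rewrite -ltnNge ltnS.
have [be fdE] := fd_scaled_power a0; have [al _ f1E] := f1_proportional.
pose P := al%:MP + (be * d%:R) *: l ^+ d.-1.
have : P \is a GRing.unit.
  apply: (jacobian_unimodular_unit (phi := idfun) (Q := fun i => l^`M(i)) J) => i.
  rewrite /= f_split fdE f1E f0_const !mderivD mderivC add0r !mderivZ.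
  rewrite -[d in l ^+ d](prednK (ltnW d_ge2)) mderivXn prednK ?(ltnW d_ge2) //.
  by rewrite /P -!mul_mpolyC mpolyCM !mpolyC_nat; ring.
rewrite mpoly_unitE => /andP[/eqP PE _].
have be0 : be = 0.
  have d1 : d.-1 != 0%N by lia.
  have := congr1 (hcomp d.-1) PE; rewrite (pihomog_ne0 _ (dhomogC _ _)) 1?eq_sym //.
  rewrite raddfD /= (pihomog_ne0 _ (dhomogC _ _)) 1?eq_sym // add0r linearZ /=.
  rewrite pihomog_dE; last by rewrite -[X in X.-homog]mul1n dhomogMn ?l_homog.
  move/eqP; rewrite scaler_eq0 expf_eq0 (negbTE (msize2_pihomog1_neq0 msize_g)) andbF orbF.
  have dn0 : (d%:R : K) != 0 by rewrite natr_neq0 //; lia.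
  by rewrite mulf_eq0 (negbTE dn0) orbF => /eqP.
rewrite f_split fdE be0 scale0r addr0; apply: leq_trans (msizeD_le _ _) _.
by rewrite geq_max (msize_dhomog_le f1_homog) (leq_trans (msize_dhomog_le f0_homog)).
Qed.

Lemma linear_factor_shape : (3 <= msize f)%N -> [/\ f0 = 0, mdvd f1 f & mdvd (f1 ^+ 2) fd].
Proof.
move=> sf; have a0 := g_const_term_eq0 sf; have [al al0 f1E] := f1_proportional.
have gE : g = l by rewrite g_split a0 mpolyC0 add0r.
have g_homog : g \is 1.-homog by rewrite gE l_homog.
have gn0 : g != 0 by rewrite gE msize2_pihomog1_neq0.
have sv_homog := shift_var_dhomog k (dhomogZ ((l^`M(k))@_0)^-1 g_homog).
have sl : sigma l = 0 by rewrite sigma_l a0 mpolyC0 oppr0.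
have sfd : f0 + sigma fd = 0 by have := sigma_f_split; rewrite f1E linearZ /= sl scaler0 addr0.
have f00 : f0 = 0.
  have := congr1 (hcomp 0) sfd; rewrite raddfD /= (pihomog_dE f0_homog) raddf0.
  by rewrite (pihomog_ne0 _ (comp_mpoly_dhomog sv_homog fd_homog)) ?addr0 //; lia.
have [q fdE] : mdvd g fd by apply: sigma_eq0_mdvd; move: sfd; rewrite f00 add0r.
have rE : r = al%:MP + q.
  apply: (mulIf gn0); rewrite -f_eq f_split f00 add0r f1E fdE -gE mulrDl mul_mpolyC //.
have q0 : hcomp 0 q = 0.
  have := congr1 (hcomp 1) fdE; rewrite mulrC (pihomogMl _ _ g_homog) /= subnn.
  rewrite (pihomog_ne0 _ fd_homog); last by lia.
  by move/esym/eqP; rewrite mulf_eq0 (negbTE gn0) => /eqP.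
have [kap r_kap] := sigma_r_const.
have [t qE] : mdvd g q.
  apply: sigma_eq0_mdvd; have sq : sigma q = (kap - al)%:MP.
    by rewrite rmorphB /= -r_kap rE rmorphD /= comp_mpolyC addrC addKr.
  have := pihomog_comp_mpoly sv_homog 0 q.
  by rewrite q0 rmorph0 sq (pihomog_dE (dhomogC _ _)) => ->.
have f1_g : f1 = al *: g by rewrite gE.
split => //; first by exists (al^-1 *: r); rewrite f_eq f1_g -scalerAl -scalerAr scalerA mulVf ?scale1r.
exists (al^-2 *: t); rewrite fdE qE f1_g exprZn -scalerAl -scalerAr scalerA.
by rewrite mulVf ?expf_neq0 // scale1r expr2 mulrA.
Qed.

End LinearFactor.

End Corollary.

Theorem corollary4p5 (K : fieldType) (n d : nat)
    (f f0 f1 fd : {mpoly K[n]}) :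
  [pchar K] =i pred0 ->
  (2 <= d)%N ->
  f0 \is 0.-homog -> f1 \is 1.-homog -> fd \is d.-homog ->
  f = f0 + f1 + fd ->
  mreducible f ->
  jacobian_unimodular f ->
  (((d <= 3)%N \/ f0 = 0) -> has_linear_divisor f) /\
  (has_linear_divisor f -> [/\ f0 = 0, mdvd f1 f & mdvd (f1 ^+ 2) fd]).
Proof.
move=> char0 d_ge2 f0_homog f1_homog fd_homog f_split f_red J.
have msize_f := msize_f_le d_ge2 f0_homog f1_homog fd_homog f_split.
split.
  case=> [d_le3 | f00].
    exact: mreducible_msize_le4 f_red (leq_trans msize_f (d_le3 : (d < 4)%N)).
  exact: linear_divisor_of_f0_eq0 d_ge2 f0_homog f1_homog fd_homog f_split f00 f_red J.
move=> [g [msize_g [r f_eq]]].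
have [k l_k] := dhomog1_mderiv_neq0 (msize2_pihomog1_neq0 msize_g) (pihomogP mdeg 1 g).
have := linear_factor_shape d_ge2 f0_homog f1_homog fd_homog f_split char0 J msize_g f_eq l_k.
by apply; exact: mreducible_msize.
Qed.
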